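(* Let $(\bm n;\bm m)\in\mathfrak C_{2r}$ with $\bm n\neq-\bm m$. Then each of the following four statements is equivalent to $\det T_{\bm n;\bm m}\neq 0$: (i) there exists a unique Laurent polynomial $\Phi(z)=z^{|\bm n|}+\dots+\alpha z^{-|\bm m|}$ (i.e. $\Phi\in\operatorname{span}\{z^k\}_{k=-|\bm m|}^{|\bm n|}$ with $z^{|\bm n|}$-coefficient $1$) such that $L_j[\Phi(w)w^{-k}]=0$ for all $-m_j\le k\le n_j-1$ and $1\le j\le r$; (ii) there exists a unique Laurent polynomial $\Phi^*(z)=\beta z^{|\bm n|}+\dots+z^{-|\bm m|}$ (i.e. $\Phi^*\in\operatorname{span}\{z^k\}_{k=-|\bm m|}^{|\bm n|}$ with $z^{-|\bm m|}$-coefficient $1$) such that $L_j[\Phi^*(w)w^{-k}]=0$ for all $-m_j+1\le k\le n_j$ and $1\le j\le r$; (iii) there exists a unique vector $(\Xi_1,\dots,\Xi_r)$ of Laurent polynomials with $\Xi_j\in\operatorname{span}\{z^k\}_{k=-n_j}^{m_j-1}$ such that $\sum_{j=1}^r L_j[\Xi_j(w)w^{-k}]=0$ for $-|\bm n|+1\le k\le |\bm m|-1$ and $\sum_{j=1}^r L_j[\Xi_j(w)w^{|\bm n|}]=1$; (iv) there exists a unique vector $(\Xi^*_1,\dots,\Xi^*_r)$ of Laurent polynomials with $\Xi^*_j\in\operatorname{span}\{z^k\}_{k=-n_j+1}^{m_j}$ such that $\sum_{j=1}^r L_j[\Xi^*_j(w)w^{-k}]=0$ for $-|\bm n|+1\le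 k\le |\bm m|-1$ and $\sum_{j=1}^r L_j[\Xi^*_j(w)w^{-|\bm m|}]=1$.
   Context: Fix $r\ge1$. For $\bm v=(v_1,\dots,v_r)\in\mathbb Z^r$, $|\bm v|:=v_1+\dots+v_r$ (signed sum, no absolute values). Let $c_{k,j}\in\mathbb C$ ($k\in\mathbb Z$, $j=1,\dots,r$) be arbitrary complex numbers and let $L_j$ be the linear functional on the space of complex Laurent polynomials in $w$ determined by $L_j[w^{-k}]=c_{k,j}$ for all $k\in\mathbb Z$. Let $\mathfrak C_{2r}=\{(\bm n;\bm m)\in\mathbb Z^r\times\mathbb Z^r: n_j+m_j\ge 0 \text{ for all } j\}$. For $(\bm n;\bm m)\in\mathfrak C_{2r}$ with $\bm n\ne-\bm m$, $T_{\bm n;\bm m}$ denotes the $(|\bm n|+|\bm m|)\times(|\bm n|+|\bm m|)$ matrix whose rows are indexed by the pairs $(j,k)$ with $1\le j\le r$, $-m_j\le k\le n_j-1$ (ordered first by $j$, then by increasing $k$; a block is empty if $n_j=-m_j$), whose columns are indexed by $i=-|\bm m|,\dots,|\bm n|-1$ in increasing order, and whose $((j,k),i)$ entry is $c_{k-i,j}$. *)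

From HB Require Import structures.
From mathcomp Require Import all_boot all_order all_algebra.
From mathcomp Require Import complex.
From mathcomp Require Import reals.
Set Implicit Arguments. Unset Strict Implicit. Unset Printing Implicit Defensive.
Import Order.TTheory GRing.Theory Num.Theory.
Local Open Scope ring_scope.

Definition zrange (a b : int) : seq int :=
  if a <= b then mkseq (fun i => a + (i%:Z)) (absz (b - a + 1)) else [::].

(* A (complex) Laurent polynomial p(z) = sum_k p_k z^k is represented by its
   coefficient function k |-> p_k (with finite support).
   in_span a b p <-> p lies in span{z^k}_{k=a}^{b}. *)
Definition in_span (K : Type) (zero : K) (a b : int) (p : int -> K) : Prop :=
  forall k : int, (k < a) || (b < k) -> p k = zero.

Section Laurent.
Variable R : realType.
Local Notation C := (R[i]).

(* p(w) * w^s *)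
Definition mulXz (p : int -> C) (s : int) : int -> C := fun k => p (k - s).

(* L_j, determined by L_j[w^{-k}] = c_{k,j}, applied (by linearity) to a Laurent
   polynomial p lying in span{w^k}_{k=a}^{b}:  L_j[p] = sum_{k=a}^{b} p_k c_{-k,j}. *)
Definition Lapp (r : nat) (c : int -> 'I_r -> C) (j : 'I_r) (a b : int)
  (p : int -> C) : C :=
  \sum_(k <- zrange a b) p k * c (- k) j.

Definition vsum (r : nat) (v : 'I_r -> int) : int := \sum_(j < r) v j.

Definition T_rows (r : nat) (n m : 'I_r -> int) : seq ('I_r * int) :=
  flatten [seq [seq (j, k) | k <- zrange (- m j) (n j - 1)] | j <- enum 'I_r].

(* T_{n;m}: (|n|+|m|) x (|n|+|m|) matrix; row p is the p-th label (j,k) of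
   T_rows, column q corresponds to i = -|m| + q; entry c_{k-i,j}. *)
Definition Tmat (r : nat) (c : int -> 'I_r -> C) (n m : 'I_r -> int) :
  'M[C]_(absz (vsum n + vsum m)) :=
  \matrix_(p, q)
    (if nth None [seq Some x | x <- T_rows n m] p is Some (j, k)
     then c (k - (- vsum m + (q : nat)%:Z)) j else 0).

End Laurent.

From HB Require Import structures.
From mathcomp Require Import all_boot all_order all_algebra.
From mathcomp Require Import complex reals.
From mathcomp Require Import zify ring.
From Stdlib Require Import FunctionalExtensionality.
Import Order.TTheory GRing.Theory Num.Theory.
Local Open Scope ring_scope.
Set Implicit Arguments. Unset Strict Implicit. Unset Printing Implicit Defensive.

(* Each of the four problems is a square linear system whose matrix is T_{n;m}
   or its transpose, so it is uniquely solvable iff det T_{n;m} <> 0.  For Phi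
   and Phi^* the unknowns are the |n| + |m| coefficients other than the
   normalized one, and the orthogonality conditions are indexed by the rows
   (j, k) of T.  For Xi and Xi^* the coefficient of z^l in Xi_j is indexed by the
   row (j, d - l), with d = -1 resp. 0, and each moment condition reads off one
   column of T. *)

Lemma unique_transfer (U V : Type) (P : U -> Prop) (Q : V -> Prop)
    (enc : V -> U) (dec : U -> V) :
  (forall x, P (enc x) <-> Q x) -> cancel enc dec ->
  (forall f, P f -> enc (dec f) = f) ->
  (exists! f, P f) <-> (exists! x, Q x).
Proof.
move=> PQ encK decK; split.
- case=> f [Pf uf]; exists (dec f); split; first by apply/PQ; rewrite decK.
  by move=> x /PQ /uf ->; rewrite encK.
- case=> x [Qx ux]; exists (enc x); split; first exact/PQ.
  by move=> f Pf; rewrite -(decK f Pf) (ux (dec f)) //; apply/PQ; rewrite decK.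
Qed.

Lemma unique_solution_det (K : fieldType) S (A : 'M[K]_S) (b : 'rV_S) :
  (exists! x : 'rV_S, x *m A = b) <-> \det A != 0.
Proof.
split.
- case=> x [xA ux]; apply/negP => /det0P [v v_neq0 vA].
  have: x + 0 = x + v by rewrite addr0; apply: ux; rewrite mulmxDl xA vA addr0.
  by move/addrI => v0; rewrite -v0 eqxx in v_neq0.
- move=> detA; have Aunit : A \in unitmx by rewrite unitmxE unitfE.
  exists (b *m invmx A); split; first by rewrite mulmxKV.
  by move=> y <-; rewrite mulmxK.
Qed.

Section ZeroExtension.
Variables (K : pzSemiRingType) (X : eqType).

Lemma sum_pred1_seq (s : seq X) y (g : X -> K) :
  uniq s -> y \in s -> \sum_(x <- s) (y == x)%:R * g x = g y.
Proof.
move=> s_uniq y_in; rewrite (bigD1_seq y) //= eqxx mul1r big1 ?addr0 // => x.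
by rewrite eq_sym => /negbTE ->; rewrite mul0r.
Qed.

Variables (S : nat) (f : 'I_S -> X).

Definition extend (x : 'rV[K]_S) (y : X) : K := \sum_p x 0 p * (f p == y)%:R.

Lemma extend_notin x y : (forall p, y != f p) -> extend x y = 0.
Proof.
by move=> fy; rewrite /extend big1 // => p _; rewrite eq_sym (negbTE (fy p)) mulr0.
Qed.

Hypothesis f_inj : injective f.

Lemma extendE x p : extend x (f p) = x 0 p.
Proof.
rewrite /extend (bigD1 p) //= eqxx mulr1 big1 ?addr0 // => q qp.
by rewrite (inj_eq f_inj) (negbTE qp) mulr0.
Qed.

Lemma extendK : cancel extend (fun g => \row_p g (f p)).
Proof. by move=> x; apply/rowP => p; rewrite mxE extendE. Qed.

Lemma restrictK g : (forall y, (forall p, y != f p) -> g y = 0) ->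
  extend (\row_p g (f p)) = g.
Proof.
move=> g0; apply: functional_extensionality => y.
case: (boolP [exists p, y == f p]) => [/existsP [p /eqP ->]|/existsPn fy].
  by rewrite extendE mxE.
by rewrite g0 ?extend_notin.
Qed.

Lemma big_extend (s : seq X) (g : X -> K) x :
  uniq s -> (forall p, f p \in s) ->
  \sum_(y <- s) extend x y * g y = \sum_p x 0 p * g (f p).
Proof.
move=> s_uniq fs; under eq_bigr do rewrite /extend mulr_suml.
rewrite exchange_big /=; apply: eq_bigr => p _.
by under eq_bigr do rewrite -mulrA; rewrite -big_distrr sum_pred1_seq.
Qed.
End ZeroExtension.

Lemma mem_zrange a b x : (x \in zrange a b) = (a <= x <= b).
Proof.
rewrite /zrange; case: ifP => ab; last by rewrite in_nil; lia.
apply/mapP/idP => [[i + ->]|xab]; first by rewrite mem_iota; lia.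
by exists (absz (x - a)); rewrite ?mem_iota; lia.
Qed.

Lemma zrange_uniq a b : uniq (zrange a b).
Proof.
rewrite /zrange; case: ifP => // _; apply: mkseq_uniq => i j /eqP ij.
by apply/eqP; lia.
Qed.

Lemma size_zrange a b : a <= b + 1 -> size (zrange a b) = absz (b - a + 1).
Proof. by rewrite /zrange; case: ifP => [_|/negbT]; rewrite ?size_mkseq //=; lia. Qed.

Lemma zrangeDr a b s : zrange (a + s) (b + s) = [seq i + s | i <- zrange a b].
Proof.
rewrite /zrange lerD2r; case: ifP => // _.
have -> : b + s - (a + s) + 1 = b - a + 1 by ring.
by rewrite /mkseq -map_comp; apply: eq_map => i /=; ring.
Qed.

Lemma Lapp_mulXz (R : realType) r (c : int -> 'I_r -> R[i]) j a b s p :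
  Lapp c j (a + s) (b + s) (mulXz p s) =
  \sum_(i <- zrange a b) p i * c (- (i + s)) j.
Proof.
by rewrite /Lapp zrangeDr big_map; apply: eq_bigr => i _; rewrite /mulXz addrK.
Qed.

Section RowLabels.
Variables (r : nat) (n m : 'I_r -> int) (j0 : 'I_r).
Hypothesis nm_ge0 : forall j, 0 <= n j + m j.
Local Notation S := (absz (vsum n + vsum m)).

Lemma vsum_ge0 : 0 <= vsum n + vsum m.
Proof. by rewrite /vsum -big_split; exact: sumr_ge0 (fun j _ => nm_ge0 j). Qed.

Lemma vsum_gt0 : ~ (forall j, n j = - m j) -> 0 < vsum n + vsum m.
Proof.
move=> nm_neq; rewrite lt_def vsum_ge0 andbT; apply/eqP.
rewrite /vsum -big_split /= => nm0; apply: nm_neq => j.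
have /(_ j isT) := psumr_eq0P (fun j _ => nm_ge0 j) nm0.
by move/eqP; rewrite addr_eq0 => /eqP.
Qed.

Lemma size_T_rows : size (T_rows n m) = S.
Proof.
rewrite size_allpairs_dep sumnE big_map big_enum /= /vsum -big_split /=.
have -> : \sum_j (n j + m j) = (\sum_j absz (n j + m j)%R)%N :> int.
  by rewrite (big_morph Posz PoszD erefl); apply: eq_bigr => j _; rewrite gez0_abs.
rewrite absz_nat; apply: eq_bigr => j _.
by rewrite size_zrange; have := nm_ge0 j; lia.
Qed.

Lemma mem_T_rows j k : ((j, k) \in T_rows n m) = (- m j <= k <= n j - 1).
Proof.
apply/allpairsPdep/idP => [[j' [k' [_ k'_in [-> ->]]]]|jk].
  by rewrite -mem_zrange.
by exists j, k; rewrite mem_enum mem_zrange.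
Qed.

Lemma T_rows_uniq : uniq (T_rows n m).
Proof.
apply: allpairs_uniq_dep => [|j _|[? ?] [? ?] _ _ [-> ->]] //.
  exact: enum_uniq.
exact: zrange_uniq.
Qed.

Definition row_label (p : 'I_S) : 'I_r * int := nth (j0, 0) (T_rows n m) p.

Lemma row_label_mem p : row_label p \in T_rows n m.
Proof. by rewrite mem_nth // size_T_rows. Qed.

Lemma row_label_inj : injective row_label.
Proof.
move=> p q /eqP; rewrite nth_uniq ?size_T_rows ?T_rows_uniq //.
by move/eqP/val_inj.
Qed.

Lemma row_labelP y : y \in T_rows n m -> exists p, row_label p = y.
Proof.
move=> y_in; have lt_y : (index y (T_rows n m) < S)%N by rewrite -size_T_rows index_mem.
by exists (Ordinal lt_y); rewrite /row_label nth_index.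
Qed.

End RowLabels.

Section TmatSystems.
Variables (R : realType) (r : nat) (c : int -> 'I_r -> R[i]) (n m : 'I_r -> int).
Variable j0 : 'I_r.
Hypothesis nm_ge0 : forall j, 0 <= n j + m j.
Local Notation S := (absz (vsum n + vsum m)).
Local Notation N := (vsum n).
Local Notation M := (vsum m).
Local Notation T := (Tmat c n m).
Local Notation lab := (@row_label r n m j0).

Let lab_mem : forall p, lab p \in T_rows n m := row_label_mem j0 nm_ge0.
Let lab_inj : injective lab := @row_label_inj r n m j0 nm_ge0.
Let labP : forall y, y \in T_rows n m -> exists p, lab p = y := row_labelP j0 nm_ge0.
Let S_ge0 : 0 <= N + M := vsum_ge0 nm_ge0.

Lemma TmatE p q : T p q = c ((lab p).2 - (- M + (q : nat)%:Z)) (lab p).1.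
Proof.
by rewrite mxE (nth_map (j0, 0)) ?size_T_rows // /row_label; case: nth.
Qed.

Lemma mulmx_TmatE (x : 'rV[R[i]]_S) q :
  (x *m T) 0 q = \sum_p x 0 p * c ((lab p).2 - (- M + (q : nat)%:Z)) (lab p).1.
Proof. by rewrite mxE; apply: eq_bigr => p _; rewrite TmatE. Qed.

Lemma mulmx_trTmatE (x : 'rV[R[i]]_S) p :
  (x *m T^T) 0 p = \sum_q x 0 q * c ((lab p).2 - (- M + (q : nat)%:Z)) (lab p).1.
Proof. by rewrite mxE; apply: eq_bigr => q _; rewrite mxE TmatE. Qed.

(* The free coefficients sit at t - M, ..., t + N - 1 and z is the remaining
   point of [-M, N]: (i) is t = 0, z = N and (ii) is t = 1, z = -M. *)
Section NormalizedPolynomial.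
Variables (t z : int) (Rt : 'I_r -> int -> bool).
Hypotheses (t01 : 0 <= t <= 1) (z_in : - M <= z <= N).
Hypothesis z_notin : ~~ (t - M <= z <= t + N - 1).
Hypothesis RtE : forall j k, Rt j k = (- m j <= k - t <= n j - 1).

Let pos (q : 'I_S) := t - M + (q : nat)%:Z.

Let pos_inj : injective pos.
Proof. by move=> q q' /addrI /eqP; rewrite eqz_nat => /eqP /val_inj. Qed.

Let pos_in_window q : t - M <= pos q <= t + N - 1.
Proof. by rewrite /pos; have := ltn_ord q; lia. Qed.

Let z_neq_pos q : z != pos q.
Proof. by apply: contraNneq z_notin => ->; apply: pos_in_window. Qed.

Definition normalized_of (x : 'rV[R[i]]_S) (i : int) := extend pos x i + (z == i)%:R.

Lemma Lapp_normalized_of x j k :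
  Lapp c j (- M - k) (N - k) (mulXz (normalized_of x) (- k)) =
  \sum_q x 0 q * c (k - t - (- M + (q : nat)%:Z)) j + c (k - z) j.
Proof.
have range_uniq := zrange_uniq (- M) N.
rewrite Lapp_mulXz; under eq_bigr do rewrite mulrDl; rewrite big_split /=.
rewrite big_extend // ?sum_pred1_seq ?mem_zrange //; last first.
  by move=> q; rewrite mem_zrange; have := pos_in_window q; lia.
congr (_ + _); last by congr (c _ _); ring.
by apply: eq_bigr => q _; congr (_ * c _ _); rewrite /pos; ring.
Qed.

Let rhs_normalized := \row_p (- c ((lab p).2 + t - z) (lab p).1) : 'rV[R[i]]_S.

Lemma normalized_of_solves x :
  [/\ in_span 0 (- M) N (normalized_of x), normalized_of x z = 1 &
       forall j k, Rt j k ->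
         Lapp c j (- M - k) (N - k) (mulXz (normalized_of x) (- k)) = 0]
  <-> x *m T^T = rhs_normalized.
Proof.
split=> [[_ _ vanish]|xT].
  apply/rowP => p; rewrite mulmx_trTmatE mxE.
  have := vanish (lab p).1 ((lab p).2 + t).
  rewrite RtE addrK -mem_T_rows -surjective_pairing lab_mem => /(_ isT).
  by rewrite Lapp_normalized_of addrK => /eqP; rewrite addr_eq0 => /eqP.
split=> [i i_out|| j k].
- rewrite /normalized_of extend_notin => [|q]; last first.
    by apply: contraTneq i_out => ->; have := pos_in_window q; lia.
  rewrite add0r (_ : z == i = false) //.
  by apply/negbTE; apply: contraTneq i_out => <-; lia.
- by rewrite /normalized_of extend_notin // eqxx add0r.
- rewrite RtE -mem_T_rows => /labP [p lab_p].
  have := congr1 (fun v : 'rV_S => v 0 p) xT; rewrite /= mulmx_trTmatE mxE lab_p /=.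
  by rewrite Lapp_normalized_of subrK => ->; rewrite addNr.
Qed.

Let normalized_restrict (Phi : int -> R[i]) := \row_q Phi (pos q).

Lemma normalized_ofK : cancel normalized_of normalized_restrict.
Proof.
move=> x; apply/rowP => q.
by rewrite mxE /normalized_of extendE // (negbTE (z_neq_pos q)) addr0.
Qed.

Lemma normalized_restrictK Phi : in_span 0 (- M) N Phi -> Phi z = 1 ->
  normalized_of (normalized_restrict Phi) = Phi.
Proof.
move=> Phi0 Phiz; apply: functional_extensionality => i; rewrite /normalized_of.
case: (eqVneq z i) => [<-|z_neq_i]; first by rewrite extend_notin ?add0r.
rewrite addr0; case: (boolP (t - M <= i <= t + N - 1)) => i_in.
  have lt_i : (absz (i - t + M)%R < S)%N by lia.
  have -> : i = pos (Ordinal lt_i) by rewrite /pos /=; lia.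
  by rewrite extendE // mxE.
rewrite Phi0 ?extend_notin // => [q|]; last by lia.
by apply: contraNneq i_in => ->; apply: pos_in_window.
Qed.

Lemma det_neq0_unique_normalized :
  \det T != 0 <->
  (exists! Phi : int -> R[i],
     [/\ in_span 0 (- M) N Phi, Phi z = 1 &
          forall j k, Rt j k -> Lapp c j (- M - k) (N - k) (mulXz Phi (- k)) = 0]).
Proof.
rewrite -det_tr -(unique_solution_det _ rhs_normalized); apply: iff_sym.
apply: (unique_transfer normalized_of_solves normalized_ofK) => Phi [Phi0 Phiz _].
exact: normalized_restrictK.
Qed.

End NormalizedPolynomial.

(* Xi_j lives on [d - n_j + 1, d + m_j]; the moment with shift s is column
   M + d + s of x *m T.  (iii) is d = -1, s0 = N and (iv) is d = 0, s0 = -M. *)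
Section DualForms.
Variables (d s0 : int) (a b : 'I_r -> int) (Z : int -> bool).
Hypotheses (aE : forall j, a j = d - n j + 1) (bE : forall j, b j = d + m j).
Hypothesis s0_in : - M - d <= s0 <= N - 1 - d.
Hypothesis ZE : forall k, Z k = (- M - d <= - k <= N - 1 - d) && (- k != s0).

Let pos (p : 'I_S) := ((lab p).1, d - (lab p).2).

Let pos_inj : injective pos.
Proof.
move=> p p' [e1 /addrI/oppr_inj e2]; apply: lab_inj.
by rewrite [lab p]surjective_pairing [lab p']surjective_pairing e1 e2.
Qed.

Let pos_in_window p : a (lab p).1 <= d - (lab p).2 <= b (lab p).1.
Proof.
have := lab_mem p.
by rewrite [lab p]surjective_pairing mem_T_rows aE bE /=; lia.
Qed.

Let col_of s : - M - d <= s <= N - 1 - d -> {q : 'I_S | (q : nat)%:Z = M + d + s}.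
Proof.
move=> s_in; have lt_s : (absz (M + d + s)%R < S)%N by lia.
by exists (Ordinal lt_s) => /=; lia.
Qed.

Definition dual_of (x : 'rV[R[i]]_S) (j : 'I_r) (l : int) := extend pos x (j, l).

Lemma moment_dual_of x s (q : 'I_S) : (q : nat)%:Z = M + d + s ->
  \sum_j Lapp c j (a j + s) (b j + s) (mulXz (dual_of x j) s) = (x *m T) 0 q.
Proof.
move=> qE; pose pairs := [seq (j, l) | j <- enum 'I_r, l <- zrange (a j) (b j)].
transitivity (\sum_(y <- pairs) extend pos x y * c (- (y.2 + s)) y.1).
  by rewrite big_allpairs_dep /= big_enum; apply: eq_bigr => j _; rewrite Lapp_mulXz.
rewrite big_extend //.
- by rewrite mulmx_TmatE; apply: eq_bigr => p _; rewrite qE /=; congr (_ * c _ _); ring.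
- apply: allpairs_uniq_dep => [|j _|[? ?] [? ?] _ _ [-> ->]] //.
    exact: enum_uniq.
  exact: zrange_uniq.
- move=> p; apply/allpairsPdep; exists (lab p).1, (d - (lab p).2).
  by rewrite mem_enum mem_zrange.
Qed.

Let delta_s0 := \row_(q < S) ((q : nat)%:Z == M + d + s0)%:R : 'rV[R[i]]_S.

Lemma dual_of_solves x :
  [/\ forall j, in_span 0 (a j) (b j) (dual_of x j),
       forall k, Z k ->
         \sum_j Lapp c j (a j - k) (b j - k) (mulXz (dual_of x j) (- k)) = 0 &
       \sum_j Lapp c j (a j + s0) (b j + s0) (mulXz (dual_of x j) s0) = 1]
  <-> x *m T = delta_s0.
Proof.
split=> [[_ vanish one]|xT].
  apply/rowP => q; rewrite -(@moment_dual_of _ ((q : nat)%:Z - M - d)) ?mxE; last ring.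
  have [e|s_neq] := eqVneq ((q : nat)%:Z - M - d) s0.
    by rewrite e one (_ : _ == _ = true) //; lia.
  rewrite -[(q : nat)%:Z - M - d]opprK vanish; last first.
    by rewrite ZE; have := ltn_ord q; lia.
  by rewrite (_ : _ == _ = false) //; lia.
split=> [j l l_out|k|].
- rewrite /dual_of extend_notin // => p; apply: contraTneq l_out => -[-> ->].
  by have := pos_in_window p; lia.
- rewrite ZE => /andP [k_in k_neq]; have [q qE] := col_of k_in.
  by rewrite (moment_dual_of _ qE) xT mxE qE (_ : _ == _ = false) //; lia.
- have [q qE] := col_of s0_in.
  by rewrite (moment_dual_of _ qE) xT mxE qE eqxx.
Qed.

Let dual_restrict (Xi : 'I_r -> int -> R[i]) := \row_p Xi (lab p).1 (d - (lab p).2).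

Lemma dual_ofK : cancel dual_of dual_restrict.
Proof. exact: extendK. Qed.

Lemma dual_restrictK Xi : (forall j, in_span 0 (a j) (b j) (Xi j)) ->
  dual_of (dual_restrict Xi) = Xi.
Proof.
move=> Xi0; apply: functional_extensionality => j.
apply: functional_extensionality => l.
rewrite /dual_of (restrictK pos_inj (g := fun y => Xi y.1 y.2)) //.
move=> [{}j {}l] /= not_pos.
apply: Xi0; apply: contraTT isT => /negPn l_in.
have [|p lab_p] := labP (y := (j, d - l)).
  by rewrite mem_T_rows aE bE in l_in *; lia.
by have := not_pos p; rewrite /pos lab_p /= subKr eqxx.
Qed.

Lemma det_neq0_unique_dual :
  \det T != 0 <->
  (exists! Xi : 'I_r -> int -> R[i],
     [/\ forall j, in_span 0 (a j) (b j) (Xi j),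
          forall k, Z k ->
            \sum_j Lapp c j (a j - k) (b j - k) (mulXz (Xi j) (- k)) = 0 &
          \sum_j Lapp c j (a j + s0) (b j + s0) (mulXz (Xi j) s0) = 1]).
Proof.
rewrite -(unique_solution_det _ delta_s0); apply: iff_sym.
apply: (unique_transfer dual_of_solves dual_ofK) => Xi [Xi0 _ _].
exact: dual_restrictK.
Qed.

End DualForms.
End TmatSystems.

Theorem proposition2p1 (R : realType) (r : nat) (c : int -> 'I_r -> R[i])
  (n m : 'I_r -> int) :
  (0 < r)%N ->
  (forall j, 0 <= n j + m j) ->
  ~ (forall j, n j = - m j) ->
  let N := vsum n in
  let M := vsum m in
  let D := \det (Tmat c n m) != 0 in
  [/\
   (* (i) *)
   D <-> (exists! Phi : int -> R[i],
            [/\ in_span 0 (- M) N Phi, Phi N = 1 &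
                forall (j : 'I_r) (k : int), - m j <= k <= n j - 1 ->
                  Lapp c j (- M - k) (N - k) (mulXz Phi (- k)) = 0]),
   (* (ii) *)
   D <-> (exists! Phis : int -> R[i],
            [/\ in_span 0 (- M) N Phis, Phis (- M) = 1 &
                forall (j : 'I_r) (k : int), - m j + 1 <= k <= n j ->
                  Lapp c j (- M - k) (N - k) (mulXz Phis (- k)) = 0]),
   (* (iii) *)
   D <-> (exists! Xi : 'I_r -> int -> R[i],
            [/\ forall j, in_span 0 (- n j) (m j - 1) (Xi j),
                forall k : int, - N + 1 <= k <= M - 1 ->
                  \sum_(j < r) Lapp c j (- n j - k) (m j - 1 - k)
                                  (mulXz (Xi j) (- k)) = 0 &
                \sum_(j < r) Lapp c j (- n j + N) (m j - 1 + N)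
                                (mulXz (Xi j) N) = 1]) &
   (* (iv) *)
   D <-> (exists! Xis : 'I_r -> int -> R[i],
            [/\ forall j, in_span 0 (- n j + 1) (m j) (Xis j),
                forall k : int, - N + 1 <= k <= M - 1 ->
                  \sum_(j < r) Lapp c j (- n j + 1 - k) (m j - k)
                                  (mulXz (Xis j) (- k)) = 0 &
                \sum_(j < r) Lapp c j (- n j + 1 - M) (m j - M)
                                (mulXz (Xis j) (- M)) = 1])].
Proof.
move=> r_gt0 nm_ge0 nm_neq; rewrite /=.
have j0 : 'I_r := Ordinal r_gt0.
have NM_gt0 := vsum_gt0 nm_ge0 nm_neq.
split.
- by apply: (det_neq0_unique_normalized c j0 nm_ge0 (t := 0) (z := vsum n)) => *; lia.
- by apply: (det_neq0_unique_normalized c j0 nm_ge0 (t := 1) (z := - vsum m)) => *; lia.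
- apply: (det_neq0_unique_dual c j0 nm_ge0 (d := -1) (s0 := vsum n)
    (a := fun j => - n j) (b := fun j => m j - 1)) => *; lia.
- apply: (det_neq0_unique_dual c j0 nm_ge0 (d := 0) (s0 := - vsum m)
    (a := fun j => - n j + 1) (b := m)) => *; lia.
Qed.
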